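(* For $z\in(0,\tfrac14)$ and $x\in[0,1]$, the function $f(z,x)=\sum_{n\ge0}P_n(x)z^n$ is given by $$f(z,x)=\Big[\sqrt{2zx+1-2z}\;S\Big(\sqrt{\tfrac{2zx+1-2z}{1-2z}}\Big)\Big]^{-1}.$$
   Context: The polynomials $P_n,Q_n$ on $[0,1]$ are defined by $Q_0=P_0=1$, $Q_{n+1}(x)=\sum_{m=0}^n\big[\int_x^1Q_m(t)dt\big]Q_{n-m}(x)$, $P_{n+1}(x)=\sum_{m=0}^n\big[\int_0^xP_m(t)dt+\int_x^1Q_m(t)dt\big]P_{n-m}(x)$. Let $T(t)=\int_t^1\frac{s\,ds}{s^2-s+1}=-\tfrac12\log(t^2-t+1)-\tfrac{\sqrt3}{3}\big[\arctan\big(\tfrac{2t-1}{\sqrt3}\big)-\tfrac{\pi}{6}\big]$; $t\mapsto e^{T(t)}$ is a strictly decreasing bijection $[0,\infty)\to(0,e^{\sqrt3\pi/9}]$, and $S$ denotes its inverse function. *)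

From Stdlib Require Import Reals List ClassicalEpsilon.
Import ListNotations.
Open Scope R_scope.

(* Riemann integral of f over [a,b] (Stdlib's RiemannInt), as a total
   function: the value of RiemannInt when f is Riemann integrable on [a,b]
   (RiemannInt is independent of the integrability proof); an unspecified
   real otherwise (never used here: all integrands are polynomials). *)
Definition Rint (f : R -> R) (a b : R) : R :=
  epsilon (inhabits 0)
    (fun l => exists pr : Riemann_integrable f a b, RiemannInt pr = l).

Fixpoint Qlist (n : nat) : list (R -> R) :=
  match n with
  | O => [fun _ => 1]
  | S k =>
      let L := Qlist k in
      L ++ [fun x => sum_f_R0 (fun m =>
              Rint (nth m L (fun _ => 0)) x 1 * nth (k - m) L (fun _ => 0) x) k]
  end.

Definition Q (n : nat) : R -> R := nth n (Qlist n) (fun _ => 0).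

Fixpoint Plist (n : nat) : list (R -> R) :=
  match n with
  | O => [fun _ => 1]
  | S k =>
      let L := Plist k in
      L ++ [fun x => sum_f_R0 (fun m =>
              (Rint (nth m L (fun _ => 0)) 0 x + Rint (Q m) x 1)
              * nth (k - m) L (fun _ => 0) x) k]
  end.

Definition P (n : nat) : R -> R := nth n (Plist n) (fun _ => 0).

Definition T (t : R) : R :=
  - / 2 * ln (t ^ 2 - t + 1)
  - sqrt 3 / 3 * (atan ((2 * t - 1) / sqrt 3) - PI / 6).

(* S = inverse of t |-> exp (T t) : [0,oo) -> (0, exp (sqrt3 pi / 9)] *)
Definition Sinv (y : R) : R :=
  epsilon (inhabits 0) (fun t => 0 <= t /\ exp (T t) = y).

From Stdlib Require Import Reals List ClassicalEpsilon Lra Lia Wf_nat Ranalysis5.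
From Coquelicot Require Import Coquelicot.
Open Scope R_scope.

(* For 0 < z < 1/4 let a(x) = 2zx + 1 - 2z and g(z,x) = sum_n Q_n(x) z^n.
   We show g = 1/sqrt a and f = sum_n P_n z^n = 1/(sqrt a * S(sqrt(a/(1-2z)))).
   The recursions of Q_n, P_n are Cauchy products, and the closed forms satisfy
   the matching fixed-point equations g = 1 + z (int_x^1 g) g and
   f = 1 + z (int_0^x f + int_x^1 g) f (using S' = -(S^2 - S + 1)/(y S)). *)

(** * 1. The polynomials Q_n and P_n *)

Lemma Qlist_length n : length (Qlist n) = S n.
Proof. induction n; simpl; auto. rewrite length_app, IHn; simpl; lia. Qed.

Lemma Plist_length n : length (Plist n) = S n.
Proof. induction n; simpl; auto. rewrite length_app, IHn; simpl; lia. Qed.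

Lemma Qlist_nth n m : (m <= n)%nat -> nth m (Qlist n) (fun _ => 0) = Q m.
Proof.
  induction n; intros Hm.
  - replace m with 0%nat by lia. reflexivity.
  - destruct (Nat.eq_dec m (S n)) as [->|Hne]; [reflexivity|].
    simpl. rewrite app_nth1 by (rewrite Qlist_length; lia). apply IHn; lia.
Qed.

Lemma Plist_nth n m : (m <= n)%nat -> nth m (Plist n) (fun _ => 0) = P m.
Proof.
  induction n; intros Hm.
  - replace m with 0%nat by lia. reflexivity.
  - destruct (Nat.eq_dec m (S n)) as [->|Hne]; [reflexivity|].
    simpl. rewrite app_nth1 by (rewrite Plist_length; lia). apply IHn; lia.
Qed.

Lemma Q_0 x : Q 0 x = 1. Proof. reflexivity. Qed.
Lemma P_0 x : P 0 x = 1. Proof. reflexivity. Qed.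

Lemma Q_succ_Rint n x :
  Q (S n) x = sum_f_R0 (fun m => Rint (Q m) x 1 * Q (n - m) x) n.
Proof.
  unfold Q at 1. simpl. rewrite app_nth2 by (rewrite Qlist_length; lia).
  rewrite Qlist_length, Nat.sub_diag. simpl.
  apply sum_eq. intros i Hi. rewrite !Qlist_nth by lia. reflexivity.
Qed.

Lemma P_succ_Rint n x :
  P (S n) x = sum_f_R0 (fun m => (Rint (P m) 0 x + Rint (Q m) x 1) * P (n - m) x) n.
Proof.
  unfold P at 1. simpl. rewrite app_nth2 by (rewrite Plist_length; lia).
  rewrite Plist_length, Nat.sub_diag. simpl.
  apply sum_eq. intros i Hi. rewrite !Plist_nth by lia. reflexivity.
Qed.

Lemma Rint_RInt f a b : ex_RInt f a b -> Rint f a b = RInt f a b.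
Proof.
  intros H. unfold Rint.
  assert (E : exists l, exists pr : Riemann_integrable f a b, RiemannInt pr = l).
  { exists (RiemannInt (ex_RInt_Reals_0 _ _ _ H)). eexists; reflexivity. }
  destruct (epsilon_spec (inhabits 0) _ E) as [pr Hpr].
  rewrite <- Hpr. symmetry. apply RInt_Reals.
Qed.

Definition Cont (f : R -> R) := forall x, continuous f x.

Lemma Cont_ex_RInt f a b : Cont f -> ex_RInt f a b.
Proof. intros H. apply (@ex_RInt_continuous R_CompleteNormedModule). intros; apply H. Qed.

Lemma Cont_RInt_lower f : Cont f -> Cont (fun y => RInt f y 1).
Proof.
  intros H y. apply (@ex_derive_continuous R_AbsRing R_NormedModule). eexists.
  apply (is_derive_RInt' f (fun a => RInt f a 1) y 1); [|apply H].
  apply filter_forall. intros. apply (@RInt_correct R_CompleteNormedModule), Cont_ex_RInt, H.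
Qed.

Lemma Cont_RInt_upper f : Cont f -> Cont (fun y => RInt f 0 y).
Proof.
  intros H y. apply (@ex_derive_continuous R_AbsRing R_NormedModule). eexists.
  apply (is_derive_RInt f (fun b => RInt f 0 b) 0 y); [|apply H].
  apply filter_forall. intros. apply (@RInt_correct R_CompleteNormedModule), Cont_ex_RInt, H.
Qed.

Lemma Cont_sum (f : nat -> R -> R) N : (forall m, (m <= N)%nat -> Cont (f m)) ->
  Cont (fun y => sum_f_R0 (fun m => f m y) N).
Proof.
  induction N; intros H y; simpl.
  - apply H; lia.
  - apply (continuous_plus (fun y => sum_f_R0 (fun m => f m y) N) (f (S N))).
    + apply IHN; intros; apply H; lia.
    + apply H; lia.
Qed.

Lemma Cont_mult f g : Cont f -> Cont g -> Cont (fun y => f y * g y).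
Proof. intros Hf Hg y. apply (continuous_mult f g); auto. Qed.

Lemma Cont_plus f g : Cont f -> Cont g -> Cont (fun y => f y + g y).
Proof. intros Hf Hg y. apply (continuous_plus f g); auto. Qed.

Lemma Cont_const c : Cont (fun _ => c).
Proof. intros y. apply continuous_const. Qed.

Lemma Cont_ext f g : (forall x, f x = g x) -> Cont f -> Cont g.
Proof. intros E H y. apply (continuous_ext f g); auto. Qed.

Lemma Q_cont n : Cont (Q n).
Proof.
  induction n as [n IH] using lt_wf_ind. destruct n.
  - apply Cont_ext with (fun _ => 1); [reflexivity | apply Cont_const].
  - apply Cont_ext with (fun x => sum_f_R0 (fun m => RInt (Q m) x 1 * Q (n - m) x) n).
    + intros x. rewrite Q_succ_Rint. apply sum_eq. intros i Hi.
      rewrite Rint_RInt; [auto | apply Cont_ex_RInt, IH; lia].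
    + apply Cont_sum. intros m Hm. apply Cont_mult.
      * apply Cont_RInt_lower, IH; lia.
      * apply IH; lia.
Qed.

Lemma P_cont n : Cont (P n).
Proof.
  induction n as [n IH] using lt_wf_ind. destruct n.
  - apply Cont_ext with (fun _ => 1); [reflexivity | apply Cont_const].
  - apply Cont_ext with
      (fun x => sum_f_R0 (fun m => (RInt (P m) 0 x + RInt (Q m) x 1) * P (n - m) x) n).
    + intros x. rewrite P_succ_Rint. apply sum_eq. intros i Hi.
      rewrite !Rint_RInt; [auto | apply Cont_ex_RInt, Q_cont | apply Cont_ex_RInt, IH; lia].
    + apply Cont_sum. intros m Hm. apply Cont_mult; [apply Cont_plus|].
      * apply Cont_RInt_upper, IH; lia.
      * apply Cont_RInt_lower, Q_cont.
      * apply IH; lia.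
Qed.

Lemma Q_succ n x : Q (S n) x = sum_f_R0 (fun m => RInt (Q m) x 1 * Q (n - m) x) n.
Proof.
  rewrite Q_succ_Rint. apply sum_eq; intros.
  rewrite Rint_RInt; [auto | apply Cont_ex_RInt, Q_cont].
Qed.

Lemma P_succ n x :
  P (S n) x = sum_f_R0 (fun m => (RInt (P m) 0 x + RInt (Q m) x 1) * P (n - m) x) n.
Proof.
  rewrite P_succ_Rint. apply sum_eq; intros.
  rewrite !Rint_RInt; [auto | apply Cont_ex_RInt, Q_cont | apply Cont_ex_RInt, P_cont].
Qed.

Lemma RInt_nonneg f a b :
  Cont f -> a <= b -> (forall t, a <= t <= b -> 0 <= f t) -> 0 <= RInt f a b.
Proof. intros Hc Hab H. apply RInt_ge_0; auto. apply Cont_ex_RInt; auto. intros; apply H; lra. Qed.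

Lemma sum_nonneg (f : nat -> R) N :
  (forall i, (i <= N)%nat -> 0 <= f i) -> 0 <= sum_f_R0 f N.
Proof.
  induction N; intros H; simpl; [apply H; lia|].
  apply Rplus_le_le_0_compat; [apply IHN; intros|]; apply H; lia.
Qed.

Lemma Q_nonneg n x : 0 <= x <= 1 -> 0 <= Q n x.
Proof.
  revert x. induction n as [n IH] using lt_wf_ind. destruct n; intros x Hx.
  - rewrite Q_0; lra.
  - rewrite Q_succ. apply sum_nonneg. intros m Hm. apply Rmult_le_pos.
    + apply RInt_nonneg; [apply Q_cont | lra |]. intros; apply IH; [lia|lra].
    + apply IH; [lia|lra].
Qed.

Lemma P_nonneg n x : 0 <= x <= 1 -> 0 <= P n x.
Proof.
  revert x. induction n as [n IH] using lt_wf_ind. destruct n; intros x Hx.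
  - rewrite P_0; lra.
  - rewrite P_succ. apply sum_nonneg. intros m Hm.
    apply Rmult_le_pos; [apply Rplus_le_le_0_compat|].
    + apply RInt_nonneg; [apply P_cont | lra |]. intros; apply IH; [lia|lra].
    + apply RInt_nonneg; [apply Q_cont | lra |]. intros; apply Q_nonneg; lra.
    + apply IH; [lia|lra].
Qed.

(** * 2. The function T, h = exp o T and its inverse S *)

Lemma quad_pos t : 0 < t ^ 2 - t + 1.
Proof. nra. Qed.

Lemma sqrt3_pos : 0 < sqrt 3.
Proof. apply sqrt_lt_R0; lra. Qed.

(* T (t) = int_t^1 s / (s^2 - s + 1) ds, i.e. T' (t) = - t / (t^2 - t + 1). *)
Lemma T_deriv t : is_derive T t (- t / (t ^ 2 - t + 1)).
Proof.
  unfold T. auto_derive; [apply quad_pos|].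
  assert (Hs : sqrt 3 * sqrt 3 = 3) by (apply sqrt_sqrt; lra).
  assert (Hs2 : sqrt 3 ^ 2 = 3) by (simpl; lra).
  pose proof sqrt3_pos. pose proof (quad_pos t).
  field_simplify; [rewrite Hs2; field; split; [lra|] | lra | repeat split; nra].
  intro E. assert (E2 : 24 * (t ^ 2 - t + 1) ^ 2 = 0) by (rewrite <- E; ring). nra.
Qed.

Lemma T_decr s t : 0 <= s -> s < t -> T t < T s.
Proof.
  intros Hs Hst.
  destruct (MVT_cor2 T (fun t => - t / (t ^ 2 - t + 1)) s t) as [c [E Hc]]; [lra| |].
  - intros; apply is_derive_Reals, T_deriv.
  - assert (0 < c / (c ^ 2 - c + 1)) by (apply Rdiv_lt_0_compat; [lra | apply quad_pos]).
    assert (- c / (c ^ 2 - c + 1) = - (c / (c ^ 2 - c + 1))) by (unfold Rdiv; ring).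
    nra.
Qed.

Lemma atan_inv_sqrt3 : atan (1 / sqrt 3) = PI / 6.
Proof. rewrite <- tan_PI6. apply atan_tan. pose proof PI_RGT_0. lra. Qed.

Lemma T_1 : T 1 = 0.
Proof.
  unfold T. replace (1 ^ 2 - 1 + 1) with 1 by ring. rewrite ln_1.
  replace ((2 * 1 - 1) / sqrt 3) with (1 / sqrt 3) by (field; apply Rgt_not_eq, sqrt3_pos).
  rewrite atan_inv_sqrt3. ring.
Qed.

Lemma T_0 : T 0 = sqrt 3 * PI / 9.
Proof.
  unfold T. replace (0 ^ 2 - 0 + 1) with 1 by ring. rewrite ln_1.
  replace ((2 * 0 - 1) / sqrt 3) with (- (1 / sqrt 3)) by (field; apply Rgt_not_eq, sqrt3_pos).
  rewrite atan_opp, atan_inv_sqrt3. field.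
Qed.

Lemma T_0_ge_half : 1 / 2 <= T 0.
Proof.
  rewrite T_0. pose proof PI2_3_2.
  assert (17 / 10 <= sqrt 3).
  { apply Rsqr_incr_0_var; [unfold Rsqr; rewrite sqrt_sqrt; lra | apply Rlt_le, sqrt3_pos]. }
  nra.
Qed.

Definition h t := exp (T t).

Lemma h_pos t : 0 < h t.
Proof. apply exp_pos. Qed.

Lemma h_cont t : continuous h t.
Proof.
  apply continuous_exp_comp, (@ex_derive_continuous R_AbsRing R_NormedModule).
  eexists; apply T_deriv.
Qed.

Lemma h_decr s t : 0 <= s -> s < t -> h t < h s.
Proof. intros; unfold h; apply exp_increasing, T_decr; auto. Qed.

Lemma h_inj s t : 0 <= s -> 0 <= t -> h s = h t -> s = t.
Proof.
  intros Hs Ht E. destruct (Rtotal_order s t) as [L|[L|L]]; auto.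
  - apply h_decr in L; auto; lra.
  - apply h_decr in L; auto; lra.
Qed.

Lemma h_1 : h 1 = 1.
Proof. unfold h; rewrite T_1; apply exp_0. Qed.

Lemma h_2_lt_1 : h 2 < 1.
Proof. rewrite <- h_1. apply h_decr; lra. Qed.

(* h 0 >= sqrt 2, which keeps the arguments of S in range for z < 1/4. *)
Lemma h_0_sq_ge_2 : 2 <= h 0 * h 0.
Proof.
  unfold h. rewrite <- exp_plus. pose proof T_0_ge_half.
  pose proof (exp_ineq1 (T 0 + T 0)). lra.
Qed.

Lemma Sinv_h t : 0 <= t -> Sinv (h t) = t.
Proof.
  intros Ht.
  assert (E : exists s, 0 <= s /\ exp (T s) = h t) by (exists t; split; [lra|reflexivity]).
  destruct (epsilon_spec (inhabits 0) _ E) as [H1 H2]. apply h_inj; auto.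
Qed.

Lemma Sinv_spec y : h 2 <= y <= h 0 -> 0 <= Sinv y <= 2 /\ h (Sinv y) = y.
Proof.
  intros Hy.
  destruct (IVT_gen_consistent h 0 2 y h_cont) as [t [Ht Et]].
  { rewrite Rmin_right, Rmax_left; [lra | |]; apply Rlt_le, h_decr; lra. }
  rewrite Rmin_left, Rmax_right in Ht by lra.
  rewrite <- Et, Sinv_h by lra. auto.
Qed.

Lemma Sinv_pos y : h 2 <= y < h 0 -> 0 < Sinv y.
Proof.
  intros Hy. destruct (Sinv_spec y) as [Hs E]; [lra|].
  destruct (Req_dec (Sinv y) 0) as [E0|]; [|lra]. rewrite E0 in E. lra.
Qed.

Lemma Sinv_1 : Sinv 1 = 1.
Proof. rewrite <- h_1 at 1. apply Sinv_h; lra. Qed.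

Lemma Sinv_decr y1 y2 : h 2 <= y1 -> y1 <= y2 -> y2 <= h 0 -> Sinv y2 <= Sinv y1.
Proof.
  intros H1 L H2. destruct (Sinv_spec y1) as [A1 B1]; [lra|].
  destruct (Sinv_spec y2) as [A2 B2]; [lra|].
  destruct (Rle_dec (Sinv y2) (Sinv y1)) as [|N]; auto.
  apply Rnot_le_lt, h_decr in N; lra.
Qed.

Lemma opp_h_deriv t : derivable_pt_lim (fun t => - h t) t (h t * (t / (t ^ 2 - t + 1))).
Proof.
  apply is_derive_Reals. unfold h.
  replace (exp (T t) * (t / (t ^ 2 - t + 1)))
    with (opp (scal (- t / (t ^ 2 - t + 1)) (exp (T t)))).
  - apply (is_derive_opp (fun t => exp (T t))).
    apply (is_derive_comp exp T); [apply is_derive_exp | apply T_deriv].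
  - unfold scal; simpl; unfold mult; simpl; unfold opp; simpl. unfold Rdiv. ring.
Qed.

Definition opp_h_derivable (a : R) : derivable_pt (fun t => - h t) a :=
  exist _ _ (opp_h_deriv a).

Lemma opp_h_Sinv_opp x :
  - h 0 <= x <= - h 2 -> comp (fun t => - h t) (fun y => Sinv (- y)) x = id x.
Proof.
  intros Hx. unfold comp, id. destruct (Sinv_spec (- x)) as [_ E]; [lra|]. rewrite E; ring.
Qed.

Lemma Sinv_opp_cont y : h 2 < y < h 0 -> continuity_pt (fun y => Sinv (- y)) (- y).
Proof.
  intros Hy. assert (h 2 < h 0) by (apply h_decr; lra).
  apply (continuity_pt_recip_interv (fun t => - h t) _ 0 2); [lra | | | | | lra].
  - intros a b Ha Hab Hb. apply Ropp_lt_contravar, h_decr; lra.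
  - intros a Ha Hb. apply opp_h_Sinv_opp; lra.
  - intros a Ha Hb. destruct (Sinv_spec (- a)); lra.
  - intros a _. apply continuity_pt_filterlim, (continuous_opp h), h_cont.
Qed.

Lemma Sinv_opp_deriv y : h 2 < y < h 0 ->
  is_derive (fun y => Sinv (- y)) (- y)
    (1 / (h (Sinv y) * (Sinv y / (Sinv y ^ 2 - Sinv y + 1)))).
Proof.
  intros Hy. set (g := fun y => Sinv (- y)).
  assert (Hg0 : g (- h 0) = 0) by (unfold g; rewrite Ropp_involutive; apply Sinv_h; lra).
  assert (Hg2 : g (- h 2) = 2) by (unfold g; rewrite Ropp_involutive; apply Sinv_h; lra).
  assert (Hgy : g (- h 0) <= g (- y) <= g (- h 2)).
  { rewrite Hg0, Hg2. unfold g. rewrite Ropp_involutive. destruct (Sinv_spec y); lra. }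
  pose proof (h_decr 0 2 ltac:(lra) ltac:(lra)).
  pose proof (derivable_pt_lim_recip_interv (fun t => - h t) g (- h 0) (- h 2) (- y)
     (fun a _ => opp_h_derivable a) (Sinv_opp_cont y Hy) ltac:(lra) ltac:(lra) Hgy
     opp_h_Sinv_opp) as D.
  simpl in D. unfold g in D. rewrite Ropp_involutive in D.
  apply is_derive_Reals, D, Rgt_not_eq.
  pose proof (Sinv_pos y ltac:(lra)).
  apply Rmult_lt_0_compat; [apply h_pos | apply Rdiv_lt_0_compat; [lra | apply quad_pos]].
Qed.

Lemma Sinv_deriv y : h 2 < y < h 0 ->
  is_derive Sinv y (- ((Sinv y) ^ 2 - Sinv y + 1) / (y * Sinv y)).
Proof.
  intros Hy.
  apply (is_derive_ext (fun y0 => Sinv (- - y0))); [intros; rewrite Ropp_involutive; auto|].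
  assert (Hn : is_derive (fun x : R => - x) y (-1)) by (auto_derive; [auto | ring]).
  pose proof (is_derive_comp (fun y => Sinv (- y)) Ropp y _ _ (Sinv_opp_deriv y Hy) Hn) as D.
  replace (- ((Sinv y) ^ 2 - Sinv y + 1) / (y * Sinv y)) with
    (scal (-1) (1 / (h (Sinv y) * (Sinv y / (Sinv y ^ 2 - Sinv y + 1))))); [exact D|].
  unfold scal; simpl; unfold mult; simpl.
  destruct (Sinv_spec y) as [_ ->]; [lra|].
  pose proof (Sinv_pos y ltac:(lra)). pose proof (quad_pos (Sinv y)). pose proof (h_pos 2).
  field. repeat split; lra.
Qed.

(** * 3. The closed forms *)

Definition rad z x := 2 * z * x + 1 - 2 * z.
Definition Sarg z x := sqrt (rad z x / (1 - 2 * z)).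

(* Closed forms of g = sum Q_n z^n and f = sum P_n z^n, and their
   antiderivatives g_int z x = int_x^1 g and f_int z x = int_0^x f. *)
Definition g_closed z x := / sqrt (rad z x).
Definition f_closed z x := / (sqrt (rad z x) * Sinv (Sarg z x)).
Definition g_int z x := (1 - sqrt (rad z x)) / z.
Definition f_int z x := sqrt (rad z x) * (1 - Sinv (Sarg z x)) / z.

Definition g_max z := / sqrt (1 - 2 * z).
Definition f_max z := / (sqrt (1 - 2 * z) * Sinv (Sarg z 1)).

Section ClosedForms.
Variable z : R.
Hypothesis Hz : 0 < z < / 4.

Lemma rad_bnd x : 0 <= x <= 1 -> 1 - 2 * z <= rad z x <= 1.
Proof. intros; unfold rad; nra. Qed.

Lemma rad_pos x : 0 <= x <= 1 -> 0 < rad z x.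
Proof. intros H; pose proof (rad_bnd x H); lra. Qed.

Lemma Sarg_sq x : 0 <= x <= 1 -> Sarg z x * Sarg z x = rad z x / (1 - 2 * z).
Proof.
  intros H. pose proof (rad_bnd x H). unfold Sarg.
  apply sqrt_sqrt, Rdiv_le_0_compat; lra.
Qed.

Lemma Sarg_ge_1 x : 0 <= x <= 1 -> 1 <= Sarg z x.
Proof.
  intros H. pose proof (rad_bnd x H). unfold Sarg.
  apply Rle_trans with (sqrt 1); [rewrite sqrt_1; lra | apply sqrt_le_1_alt]. apply (Rmult_le_reg_r (1 - 2 * z)); [lra|].
  replace (rad z x / (1 - 2 * z) * (1 - 2 * z)) with (rad z x) by (field; lra). lra.
Qed.

(* Since 1/(1 - 2z) < 2 <= h 0 ^ 2, the argument of S stays inside (h 2, h 0). *)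
Lemma Sarg_range x : 0 <= x <= 1 -> h 2 < Sarg z x < h 0.
Proof.
  intros H. pose proof (Sarg_ge_1 x H). pose proof (Sarg_sq x H). pose proof (rad_bnd x H).
  pose proof h_2_lt_1. pose proof h_0_sq_ge_2. pose proof (h_pos 0).
  assert (Sarg z x * Sarg z x < 2).
  { rewrite H1. apply (Rmult_lt_reg_r (1 - 2 * z)); [lra|].
    replace (rad z x / (1 - 2 * z) * (1 - 2 * z)) with (rad z x) by (field; lra). lra. }
  split; nra.
Qed.

Lemma Sinv_Sarg_bnd x : 0 <= x <= 1 -> 0 < Sinv (Sarg z x) <= 1.
Proof.
  intros H. pose proof (Sarg_range x H). pose proof (Sarg_ge_1 x H). split.
  - apply Sinv_pos; lra.
  - rewrite <- Sinv_1. apply Sinv_decr; pose proof h_2_lt_1; lra.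
Qed.

Lemma f_int_deriv x : 0 <= x <= 1 -> is_derive (f_int z) x (f_closed z x).
Proof.
  intros H. pose proof (rad_pos x H) as Ha. pose proof (Sarg_range x H) as Hr.
  pose proof (Sinv_deriv _ Hr) as DS. pose proof (Sinv_Sarg_bnd x H) as HS.
  pose proof (Sarg_sq x H) as Hsq. pose proof (Sarg_ge_1 x H) as Hr1.
  unfold f_int, f_closed, Sarg, rad in *.
  auto_derive.
  - unfold Rminus, Rdiv in *. repeat split; try lra.
    + eexists; exact DS.
    + apply Rmult_lt_0_compat; [lra | apply Rinv_0_lt_compat; lra].
  - unfold Rminus, Rdiv in *. change (fun x0 : R => Sinv x0) with Sinv.
    rewrite (is_derive_unique _ _ _ DS).
    set (s := sqrt (2 * z * x + 1 + - (2 * z))) in *.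
    set (r := sqrt ((2 * z * x + 1 + - (2 * z)) * / (1 + - (2 * z)))) in *.
    set (S := Sinv r) in *.
    assert (Hs : 0 < s) by (apply sqrt_lt_R0; lra).
    assert (E : 1 + - (2 * z) = s * s * / (r * r)).
    { rewrite Hsq. unfold s. rewrite sqrt_sqrt by lra. field. split; lra. }
    rewrite E. field. repeat split; lra.
Qed.

Lemma g_int_deriv x : 0 <= x <= 1 -> is_derive (fun t => - g_int z t) x (g_closed z x).
Proof.
  intros H. pose proof (rad_pos x H) as Ha. unfold g_int, g_closed, rad in *.
  auto_derive; [lra|].
  assert (0 < sqrt (2 * z * x + 1 - 2 * z)) by (apply sqrt_lt_R0; lra).
  unfold Rminus in *. field. lra.
Qed.

Lemma f_closed_cont x : 0 <= x <= 1 -> continuous (f_closed z) x.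
Proof.
  intros H. apply (@ex_derive_continuous R_AbsRing R_NormedModule).
  pose proof (rad_pos x H) as Ha. pose proof (Sarg_range x H) as Hr.
  pose proof (Sinv_deriv _ Hr) as DS. pose proof (Sinv_Sarg_bnd x H) as HS.
  unfold f_closed, Sarg, rad in *.
  auto_derive. unfold Rminus, Rdiv in *.
  assert (0 < sqrt (2 * z * x + 1 + - (2 * z))) by (apply sqrt_lt_R0; lra).
  repeat split; try lra;
  first [ apply Rmult_lt_0_compat; [lra | apply Rinv_0_lt_compat; lra]
        | eexists; exact DS
        | apply Rgt_not_eq, Rmult_lt_0_compat; lra ].
Qed.

Lemma g_closed_cont x : 0 <= x <= 1 -> continuous (g_closed z) x.
Proof.
  intros H. apply (@ex_derive_continuous R_AbsRing R_NormedModule).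
  pose proof (rad_pos x H) as Ha. unfold g_closed, rad in *.
  auto_derive. split; [lra|].
  assert (0 < sqrt (2 * z * x + 1 - 2 * z)) by (apply sqrt_lt_R0; lra).
  unfold Rminus in *; lra.
Qed.

Lemma closed_ex_RInt (k : R -> R) a b :
  (forall x, 0 <= x <= 1 -> continuous k x) -> 0 <= a <= 1 -> 0 <= b <= 1 ->
  ex_RInt k a b.
Proof.
  intros Hk Ha Hb. apply (@ex_RInt_continuous R_CompleteNormedModule). intros t Ht.
  apply Hk. split.
  - apply Rle_trans with (Rmin a b); [apply Rmin_glb; lra | lra].
  - apply Rle_trans with (Rmax a b); [lra | apply Rmax_lub; lra].
Qed.

Lemma f_int_0 : f_int z 0 = 0.
Proof.
  unfold f_int, Sarg, rad. replace (2 * z * 0 + 1 - 2 * z) with (1 - 2 * z) by ring.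
  replace ((1 - 2 * z) / (1 - 2 * z)) with 1 by (field; lra). rewrite sqrt_1, Sinv_1.
  unfold Rdiv; ring.
Qed.

Lemma g_int_1 : g_int z 1 = 0.
Proof.
  unfold g_int, rad. replace (2 * z * 1 + 1 - 2 * z) with 1 by ring. rewrite sqrt_1.
  unfold Rdiv; ring.
Qed.

Lemma RInt_f_closed x : 0 <= x <= 1 -> RInt (f_closed z) 0 x = f_int z x.
Proof.
  intros H. apply is_RInt_unique.
  replace (f_int z x) with (minus (f_int z x) (f_int z 0)).
  - apply (@is_RInt_derive R_CompleteNormedModule); intros t Ht;
      rewrite Rmin_left, Rmax_right in Ht by lra;
      [apply f_int_deriv | apply f_closed_cont]; lra.
  - rewrite f_int_0. unfold minus, plus, opp; simpl. ring.
Qed.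

Lemma RInt_g_closed x : 0 <= x <= 1 -> RInt (g_closed z) x 1 = g_int z x.
Proof.
  intros H. apply is_RInt_unique.
  replace (g_int z x) with (minus (- g_int z 1) (- g_int z x)).
  - apply (@is_RInt_derive R_CompleteNormedModule (fun t => - g_int z t)); intros t Ht;
      rewrite Rmin_left, Rmax_right in Ht by lra;
      [apply g_int_deriv | apply g_closed_cont]; lra.
  - rewrite g_int_1. unfold minus, plus, opp; simpl. ring.
Qed.

Lemma g_closed_fixed x : 0 <= x <= 1 -> g_closed z x = 1 + z * g_int z x * g_closed z x.
Proof.
  intros H. pose proof (rad_pos x H). unfold g_closed, g_int.
  assert (0 < sqrt (rad z x)) by (apply sqrt_lt_R0; lra). field. lra.
Qed.

Lemma f_closed_fixed x : 0 <= x <= 1 ->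
  f_closed z x = 1 + z * (f_int z x + g_int z x) * f_closed z x.
Proof.
  intros H. pose proof (rad_pos x H). pose proof (Sinv_Sarg_bnd x H). unfold f_closed, f_int, g_int.
  assert (0 < sqrt (rad z x)) by (apply sqrt_lt_R0; lra). field. lra.
Qed.

Lemma sqrt_rad_bnd x : 0 <= x <= 1 ->
  0 < sqrt (1 - 2 * z) <= sqrt (rad z x) /\ sqrt (rad z x) <= 1.
Proof.
  intros H. pose proof (rad_bnd x H). split; [split|].
  - apply sqrt_lt_R0; lra.
  - apply sqrt_le_1_alt; lra.
  - rewrite <- sqrt_1; apply sqrt_le_1_alt; lra.
Qed.

Lemma g_closed_bnd x : 0 <= x <= 1 -> 1 <= g_closed z x <= g_max z.
Proof.
  intros H. pose proof (sqrt_rad_bnd x H). unfold g_closed, g_max. split.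
  - rewrite <- Rinv_1. apply Rinv_le_contravar; lra.
  - apply Rinv_le_contravar; lra.
Qed.

Lemma f_closed_bnd x : 0 <= x <= 1 -> 1 <= f_closed z x <= f_max z.
Proof.
  intros H. pose proof (sqrt_rad_bnd x H). unfold f_closed, f_max.
  pose proof (Sinv_Sarg_bnd x H). pose proof (Sinv_Sarg_bnd 1 ltac:(lra)).
  assert (Sinv (Sarg z 1) <= Sinv (Sarg z x)).
  { pose proof (Sarg_range x H). pose proof (Sarg_range 1 ltac:(lra)).
    apply Sinv_decr; try lra. unfold Sarg. apply sqrt_le_1_alt. unfold Rdiv.
    apply Rmult_le_compat_r; [apply Rlt_le, Rinv_0_lt_compat; lra | unfold rad; nra]. }
  split.
  - rewrite <- Rinv_1. apply Rinv_le_contravar; [apply Rmult_lt_0_compat; lra|].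
    rewrite <- (Rmult_1_l 1). apply Rmult_le_compat; lra.
  - apply Rinv_le_contravar; [apply Rmult_lt_0_compat; lra|].
    apply Rmult_le_compat; lra.
Qed.

End ClosedForms.

(** * 4. General facts on sequences, sums and integrals *)

Definition cauchy (a p : nat -> R) (n : nat) : R :=
  sum_f_R0 (fun m => a m * p (n - m)%nat) n.

Lemma cauchy_partial_sum a p N :
  sum_f_R0 (cauchy a p) N = sum_f_R0 (fun m => a m * sum_f_R0 p (N - m)) N.
Proof.
  induction N; unfold cauchy in *; [reflexivity|].
  rewrite tech5, IHN, tech5, Nat.sub_diag.
  rewrite (tech5 (fun m => a m * sum_f_R0 p (S N - m))), Nat.sub_diag.
  rewrite (sum_eq (fun m => a m * sum_f_R0 p (S N - m))
             (fun m => a m * sum_f_R0 p (N - m) + a m * p (S N - m)%nat)).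
  - rewrite sum_plus. simpl. ring.
  - intros i Hi. replace (S N - i)%nat with (S (N - i)) by lia. rewrite tech5. ring.
Qed.

Lemma partial_sum_mono (u : nat -> R) i j :
  (forall n, 0 <= u n) -> (i <= j)%nat -> sum_f_R0 u i <= sum_f_R0 u j.
Proof. intros Hu H. induction H; [lra|]. rewrite tech5. pose proof (Hu (S m)). lra. Qed.

Lemma term_le_partial_sum (u : nat -> R) n : (forall n, 0 <= u n) -> u n <= sum_f_R0 u n.
Proof.
  intros Hu. destruct n; [simpl; lra|]. rewrite tech5.
  pose proof (cond_pos_sum u n Hu). lra.
Qed.

Lemma is_series_sum_f_R0 (u : nat -> R) (l : R) :
  is_series u l <-> is_lim_seq (sum_f_R0 u) l.
Proof. rewrite is_series_Reals, is_lim_seq_Reals. reflexivity. Qed.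

Section Convolution.
(* A sequence p with p_0 = 1 and p_{n+1} = z (a * p)_n, a and p nonnegative:
   this is the shape of the terms Q_n(x) z^n and P_n(x) z^n. *)
Variables (a p : nat -> R) (z : R).
Hypothesis z_nonneg : 0 <= z.
Hypothesis a_nonneg : forall n, 0 <= a n.
Hypothesis p_nonneg : forall n, 0 <= p n.
Hypothesis p_0 : p 0%nat = 1.
Hypothesis p_succ : forall n, p (S n) = z * cauchy a p n.

Lemma convolution_partial_sum N :
  sum_f_R0 p (S N) = 1 + z * sum_f_R0 (cauchy a p) N.
Proof.
  rewrite decomp_sum by lia. simpl pred. rewrite p_0, scal_sum.
  f_equal. apply sum_eq. intros i _. rewrite p_succ. ring.
Qed.

Lemma convolution_bound_step G B N :
  G = 1 + z * B * G -> sum_f_R0 a N <= B -> sum_f_R0 p N <= G ->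
  sum_f_R0 p (S N) <= G.
Proof.
  intros HG HA HS. rewrite convolution_partial_sum, cauchy_partial_sum.
  assert (Hrow : sum_f_R0 (fun m => a m * sum_f_R0 p (N - m)) N <= sum_f_R0 a N * sum_f_R0 p N).
  { rewrite Rmult_comm, scal_sum. apply sum_Rle. intros i Hi.
    apply Rmult_le_compat_l; [apply a_nonneg | apply partial_sum_mono; auto; lia]. }
  assert (0 <= sum_f_R0 a N) by (apply cond_pos_sum, a_nonneg).
  assert (0 <= sum_f_R0 p N) by (apply cond_pos_sum, p_nonneg).
  assert (sum_f_R0 a N * sum_f_R0 p N <= B * G) by (apply Rmult_le_compat; lra).
  rewrite HG. nra.
Qed.

Lemma convolution_fixed_point (B L : R) :
  is_lim_seq (sum_f_R0 a) B -> is_lim_seq (sum_f_R0 p) L -> L = 1 + z * B * L.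
Proof.
  intros HB HL.
  pose proof (is_series_mult_pos a p B L (proj2 (is_series_sum_f_R0 _ _) HB)
    (proj2 (is_series_sum_f_R0 _ _) HL) a_nonneg p_nonneg) as HC.
  apply is_series_sum_f_R0 in HC. apply is_lim_seq_incr_1 in HL.
  assert (H : is_lim_seq (fun N => 1 + z * sum_f_R0 (cauchy a p) N) (1 + z * (B * L))).
  { apply is_lim_seq_plus'; [apply is_lim_seq_const | apply is_lim_seq_mult'; [apply is_lim_seq_const | exact HC]]. }
  apply (is_lim_seq_ext _ (fun N => sum_f_R0 p (S N))) in H;
    [|intros; symmetry; apply convolution_partial_sum].
  apply is_lim_seq_unique in H, HL. rewrite HL in H. injection H. lra.
Qed.

End Convolution.

Definition seq_lim (u : nat -> R) : R := real (Lim_seq u).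

Lemma seq_lim_incr (u : nat -> R) M :
  (forall n, u n <= u (S n)) -> (forall n, u n <= M) -> is_lim_seq u (seq_lim u).
Proof.
  intros H1 H2. apply Lim_seq_correct'. apply (ex_finite_lim_seq_incr u M H1 H2).
Qed.

Lemma lim_le_const (u : nat -> R) (l c : R) : is_lim_seq u l -> (forall n, u n <= c) -> l <= c.
Proof. intros H1 H2. apply (is_lim_seq_le u (fun _ => c) l c H2 H1 (is_lim_seq_const c)). Qed.

Lemma lim_ge_const (u : nat -> R) (l c : R) : is_lim_seq u l -> (forall n, c <= u n) -> c <= l.
Proof. intros H1 H2. apply (is_lim_seq_le (fun _ => c) u c l H2 (is_lim_seq_const c) H1). Qed.

Lemma geometric_tail_finite (t : nat -> R) K rho : 0 < rho < 1 ->
  (forall n, 0 <= t n <= K * rho ^ n) ->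
  forall N k, sum_f_R0 t (N + k) - sum_f_R0 t N <= K * rho ^ (S N) / (1 - rho).
Proof.
  intros Hr Ht N k.
  assert (G : sum_f_R0 t (N + k) - sum_f_R0 t N <= K * rho ^ (S N) * (1 - rho ^ k) / (1 - rho)).
  { induction k.
    - rewrite Nat.add_0_r. simpl. unfold Rdiv. rewrite Rminus_diag. lra.
    - rewrite Nat.add_succ_r, tech5. specialize (Ht (S (N + k))).
      replace (rho ^ S (N + k)) with (rho ^ S N * rho ^ k) in Ht by (rewrite <- pow_add; f_equal; lia).
      assert (K * rho ^ S N * (1 - rho ^ S k) / (1 - rho)
              = K * rho ^ S N * (1 - rho ^ k) / (1 - rho) + K * (rho ^ S N * rho ^ k))
        by (simpl; field; lra).
      lra. }
  assert (0 <= K * rho ^ S N).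
  { specialize (Ht 0%nat). simpl in Ht. apply Rmult_le_pos; [lra | apply pow_le; lra]. }
  assert (0 < rho ^ k) by (apply pow_lt; lra).
  assert (K * rho ^ S N * (1 - rho ^ k) / (1 - rho) <= K * rho ^ S N / (1 - rho)).
  { unfold Rdiv. apply Rmult_le_compat_r; [apply Rlt_le, Rinv_0_lt_compat; lra | nra]. }
  lra.
Qed.

Lemma geometric_tail (t : nat -> R) K rho (l : R) : 0 < rho < 1 ->
  (forall n, 0 <= t n <= K * rho ^ n) ->
  is_lim_seq (sum_f_R0 t) l -> forall N, l - sum_f_R0 t N <= K * rho ^ (S N) / (1 - rho).
Proof.
  intros Hr Ht Hl N.
  apply (is_lim_seq_incr_n _ N) in Hl.
  pose proof (is_lim_seq_minus' _ _ _ _ Hl (is_lim_seq_const (sum_f_R0 t N))) as H2.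
  apply (lim_le_const _ _ _ H2). intros n. rewrite Nat.add_comm.
  apply geometric_tail_finite; auto.
Qed.

Lemma geometric_tail_lim K rho : 0 < rho < 1 ->
  is_lim_seq (fun N => K * rho ^ (S N) / (1 - rho)) 0.
Proof.
  intros Hr. apply (proj1 (is_lim_seq_incr_1 (fun N => K * rho ^ N / (1 - rho)) 0)).
  apply (is_lim_seq_ext (fun N => (K / (1 - rho)) * rho ^ N)); [intros; field; lra|].
  replace (Finite 0) with (Rbar_mult (K / (1 - rho)) 0) by (simpl; f_equal; ring).
  apply is_lim_seq_scal_l, is_lim_seq_geom. rewrite Rabs_right; lra.
Qed.

Lemma fixed_point_diff a b c d z :
  a = 1 + z * c * a -> b = 1 + z * d * b -> a - b = z * a * b * (c - d).
Proof.
  intros H1 H2.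
  assert (b * (a - (1 + z * c * a)) = 0) by (rewrite <- H1; ring).
  assert (a * (b - (1 + z * d * b)) = 0) by (rewrite <- H2; ring).
  nra.
Qed.

Lemma integral_gap_lim_le (G : R -> R) (s : nat -> R -> R) (eta : nat -> R) (x y M D : R) :
  x <= y -> ex_RInt G x y -> (forall N, Cont (s N)) -> is_lim_seq eta 0 ->
  (forall N t, x <= t <= y -> G t - s N t <= M + eta N) ->
  is_lim_seq (fun N => RInt G x y - RInt (s N) x y) D -> D <= (y - x) * M.
Proof.
  intros Hxy HG Hs Heta Hb HD.
  assert (Hlim : is_lim_seq (fun N => (y - x) * (M + eta N)) ((y - x) * (M + 0))).
  { apply (is_lim_seq_scal_l _ (y - x) (M + 0)).
    apply is_lim_seq_plus'; [apply is_lim_seq_const | exact Heta]. }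
  assert (Hle : forall N, RInt G x y - RInt (s N) x y <= (y - x) * (M + eta N)).
  { intros N.
    assert (E : RInt (fun t => s N t + (M + eta N)) x y = RInt (s N) x y + (y - x) * (M + eta N)).
    { transitivity (RInt (fun t => plus (s N t) (M + eta N)) x y); [reflexivity|].
      rewrite (@RInt_plus R_CompleteNormedModule (s N) (fun _ => M + eta N)),
        RInt_const; [| apply Cont_ex_RInt, Hs | apply Cont_ex_RInt, Cont_const].
      unfold plus, scal; simpl; unfold mult; simpl. ring. }
    cut (RInt G x y <= RInt (fun t => s N t + (M + eta N)) x y); [lra|].
    apply RInt_le; auto.
    - apply Cont_ex_RInt, Cont_plus; [apply Hs | apply Cont_const].
    - intros t Ht. pose proof (Hb N t ltac:(lra)). lra. }
  pose proof (is_lim_seq_le _ _ _ _ Hle HD Hlim) as L. simpl in L.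
  rewrite Rplus_0_r in L. exact L.
Qed.

Lemma gronwall_vanish (J : R -> R) C : 0 <= C -> J 0 = 0 ->
  (forall x, 0 <= x <= 1 -> 0 <= J x) ->
  (forall x y, 0 <= x -> x <= y -> y <= 1 -> J y <= J x + (y - x) * C * J y) ->
  forall y, 0 <= y <= 1 -> J y = 0.
Proof.
  intros HC H0 Hpos Hrel.
  (* steps of length hh satisfy hh C <= 1/2, so J propagates from 0 *)
  set (hh := / (2 * (C + 1))).
  assert (Hh : 0 < hh) by (unfold hh; apply Rinv_0_lt_compat; lra).
  assert (HhC : hh * C <= / 2).
  { unfold hh. apply (Rmult_le_reg_l (2 * (C + 1))); [lra|].
    replace (2 * (C + 1) * (/ (2 * (C + 1)) * C)) with C by (field; lra). lra. }
  assert (Ind : forall k y, 0 <= y <= 1 -> y <= INR k * hh -> J y = 0).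
  { induction k; intros y Hy Hk.
    - simpl in Hk. replace y with 0 by lra. auto.
    - rewrite S_INR, Rmult_plus_distr_r, Rmult_1_l in Hk.
      destruct (Rle_dec y (INR k * hh)) as [|Hlt]; [apply IHk; auto|].
      apply Rnot_le_lt in Hlt. set (x := INR k * hh) in *.
      assert (0 <= x) by (unfold x; apply Rmult_le_pos; [apply pos_INR | lra]).
      assert (J x = 0) by (apply IHk; lra).
      specialize (Hrel x y ltac:(lra) ltac:(lra) ltac:(lra)). pose proof (Hpos y Hy).
      assert ((y - x) * C <= / 2).
      { apply Rle_trans with (hh * C); auto. apply Rmult_le_compat_r; lra. }
      nra. }
  intros y Hy. destruct (archimed_cor1 hh Hh) as [k [Hk Hk0]].
  apply (Ind k y Hy).
  assert (0 < INR k) by (apply lt_0_INR; lia).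
  assert (1 <= INR k * hh).
  { apply (Rmult_le_reg_l (/ INR k)); [apply Rinv_0_lt_compat; auto|].
    rewrite <- Rmult_assoc, Rinv_l, Rmult_1_l by lra. lra. }
  lra.
Qed.

Lemma is_RInt_reflect (f : R -> R) x y l :
  is_RInt f (1 - y) (1 - x) l -> is_RInt (fun t => f (1 - t)) x y l.
Proof.
  intros H. apply (@is_RInt_swap R_CompleteNormedModule) in H.
  replace (1 - x) with (-1 * x + 1) in H by ring.
  replace (1 - y) with (-1 * y + 1) in H by ring.
  apply (@is_RInt_comp_lin R_CompleteNormedModule) in H.
  apply (@is_RInt_scal R_CompleteNormedModule _ _ _ (-1)) in H.
  eapply is_RInt_ext; [|replace l with (scal (-1) (opp l)); [exact H|]].
  - intros t _. unfold scal; simpl; unfold mult; simpl. replace (-1 * t + 1) with (1 - t) by ring. ring.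
  - unfold scal, opp; simpl; unfold mult; simpl. ring.
Qed.

Lemma ex_RInt_reflect (f : R -> R) x y :
  ex_RInt f (1 - y) (1 - x) -> ex_RInt (fun t => f (1 - t)) x y.
Proof. intros [l H]. exists l. apply is_RInt_reflect, H. Qed.

Lemma RInt_reflect (f : R -> R) x y : ex_RInt f (1 - y) (1 - x) ->
  RInt (fun t => f (1 - t)) x y = RInt f (1 - y) (1 - x).
Proof. intros H. apply is_RInt_unique, is_RInt_reflect, (@RInt_correct R_CompleteNormedModule), H. Qed.

Lemma Cont_reflect f : Cont f -> Cont (fun t => f (1 - t)).
Proof.
  intros H t. apply (continuous_comp (fun t => 1 - t) f); [|apply H].
  apply (@ex_derive_continuous R_AbsRing R_NormedModule). auto_derive; auto.
Qed.

Lemma RInt_sum (f : nat -> R -> R) (c : nat -> R) a b N : (forall n, Cont (f n)) ->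
  RInt (fun t => sum_f_R0 (fun n => f n t * c n) N) a b
  = sum_f_R0 (fun n => RInt (f n) a b * c n) N.
Proof.
  intros Hf. induction N; simpl.
  - rewrite (RInt_ext _ (fun t => scal (c 0%nat) (f 0%nat t))).
    + rewrite (@RInt_scal R_CompleteNormedModule); [|apply Cont_ex_RInt, Hf].
      unfold scal; simpl; unfold mult; simpl; ring.
    + intros; unfold scal; simpl; unfold mult; simpl; ring.
  - rewrite (RInt_ext _ (fun t => plus (sum_f_R0 (fun n => f n t * c n) N) (scal (c (S N)) (f (S N) t)))).
    + rewrite (@RInt_plus R_CompleteNormedModule), (@RInt_scal R_CompleteNormedModule), IHN.
      * unfold plus, scal; simpl; unfold mult; simpl; ring.
      * apply Cont_ex_RInt, Hf.
      * apply Cont_ex_RInt, Cont_sum. intros; apply Cont_mult; [apply Hf | apply Cont_const].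
      * apply (@ex_RInt_scal R_CompleteNormedModule), Cont_ex_RInt, Hf.
    + intros; unfold plus, scal; simpl; unfold mult; simpl; ring.
Qed.

Lemma integral_gap_vanish (G L J : R -> R) (s : nat -> R -> R) (eta : nat -> R) (C : R) :
  0 <= C -> is_lim_seq eta 0 -> (forall N, Cont (s N)) ->
  (forall x y, 0 <= x -> x <= y -> y <= 1 -> ex_RInt G x y) ->
  (forall N t, 0 <= t <= 1 -> s N t <= G t) ->
  (forall N t, 0 <= t <= 1 -> L t - s N t <= eta N) ->
  (forall t, 0 <= t <= 1 -> G t - L t <= C * J t) ->
  (forall x y, 0 <= x -> x <= y -> y <= 1 ->
     is_lim_seq (fun N => RInt G x y - RInt (s N) x y) (J y - J x)) ->
  J 0 = 0 -> forall t, 0 <= t <= 1 -> J t = 0.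
Proof.
  intros HC Heta Hs HG HsG Htail Hgap Hinc HJ0.
  assert (Hmono : forall x y, 0 <= x -> x <= y -> y <= 1 -> J x <= J y).
  { intros x y Hx Hxy Hy. cut (0 <= J y - J x); [lra|].
    apply (lim_ge_const _ _ _ (Hinc x y Hx Hxy Hy)). intros N.
    cut (RInt (s N) x y <= RInt G x y); [lra|].
    apply RInt_le; auto; [apply Cont_ex_RInt, Hs | intros; apply HsG; lra]. }
  apply (gronwall_vanish J C HC HJ0).
  - intros x Hx. rewrite <- HJ0. apply Hmono; lra.
  - intros x y Hx Hxy Hy. cut (J y - J x <= (y - x) * (C * J y)); [lra|].
    apply (integral_gap_lim_le G s eta x y); auto.
    intros N t Ht. pose proof (Hgap t ltac:(lra)). pose proof (Htail N t ltac:(lra)).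
    pose proof (Hmono t y ltac:(lra) ltac:(lra) Hy). nra.
Qed.

(** * 5. The partial sums and their limits *)

Definition Qterm z x n := Q n x * z ^ n.
Definition Pterm z x n := P n x * z ^ n.
Definition sQ z N x := sum_f_R0 (Qterm z x) N.
Definition sP z N x := sum_f_R0 (Pterm z x) N.
Definition aQ z x m := RInt (Q m) x 1 * z ^ m.
Definition aP z x m := (RInt (P m) 0 x + RInt (Q m) x 1) * z ^ m.

Lemma pow_split z n m : (m <= n)%nat -> z ^ S n = z * (z ^ m * z ^ (n - m)).
Proof. intros H. rewrite <- pow_add. replace (m + (n - m))%nat with n by lia. simpl; ring. Qed.

Lemma Qterm_succ z x n : Qterm z x (S n) = z * cauchy (aQ z x) (Qterm z x) n.
Proof.
  unfold Qterm, cauchy, aQ. rewrite Q_succ, Rmult_comm, !scal_sum.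
  apply sum_eq. intros m Hm. rewrite (pow_split z n m) by lia. ring.
Qed.

Lemma Pterm_succ z x n : Pterm z x (S n) = z * cauchy (aP z x) (Pterm z x) n.
Proof.
  unfold Pterm, cauchy, aP. rewrite P_succ, Rmult_comm, !scal_sum.
  apply sum_eq. intros m Hm. rewrite (pow_split z n m) by lia. ring.
Qed.

Lemma sQ_cont z N : Cont (sQ z N).
Proof. apply Cont_sum. intros. apply Cont_mult; [apply Q_cont | apply Cont_const]. Qed.

Lemma sP_cont z N : Cont (sP z N).
Proof. apply Cont_sum. intros. apply Cont_mult; [apply P_cont | apply Cont_const]. Qed.

Lemma sum_aQ z x N : sum_f_R0 (aQ z x) N = RInt (sQ z N) x 1.
Proof. symmetry. apply (RInt_sum Q (fun n => z ^ n)). intros; apply Q_cont. Qed.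

Lemma sum_aP z x N : sum_f_R0 (aP z x) N = RInt (sP z N) 0 x + RInt (sQ z N) x 1.
Proof.
  unfold sP, sQ, Pterm, Qterm.
  rewrite (RInt_sum P (fun n => z ^ n)), (RInt_sum Q (fun n => z ^ n)), <- sum_plus;
    [| intros; apply Q_cont | intros; apply P_cont].
  apply sum_eq; intros. unfold aP. ring.
Qed.

Section Nonneg.
Variables (z x : R).
Hypothesis Hz : 0 <= z.
Hypothesis Hx : 0 <= x <= 1.

Lemma Qterm_nonneg n : 0 <= Qterm z x n.
Proof. apply Rmult_le_pos; [apply Q_nonneg; auto | apply pow_le; auto]. Qed.

Lemma Pterm_nonneg n : 0 <= Pterm z x n.
Proof. apply Rmult_le_pos; [apply P_nonneg; auto | apply pow_le; auto]. Qed.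

Lemma aQ_nonneg m : 0 <= aQ z x m.
Proof.
  apply Rmult_le_pos; [|apply pow_le; auto].
  apply RInt_nonneg; [apply Q_cont | lra | intros; apply Q_nonneg; lra].
Qed.

Lemma aP_nonneg m : 0 <= aP z x m.
Proof.
  apply Rmult_le_pos; [apply Rplus_le_le_0_compat | apply pow_le; auto].
  - apply RInt_nonneg; [apply P_cont | lra | intros; apply P_nonneg; lra].
  - apply RInt_nonneg; [apply Q_cont | lra | intros; apply Q_nonneg; lra].
Qed.

End Nonneg.

Lemma sQ_nonneg z N x : 0 <= z -> 0 <= x <= 1 -> 0 <= sQ z N x.
Proof. intros. apply cond_pos_sum. intros; apply Qterm_nonneg; auto. Qed.

Lemma sP_nonneg z N x : 0 <= z -> 0 <= x <= 1 -> 0 <= sP z N x.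
Proof. intros. apply cond_pos_sum. intros; apply Pterm_nonneg; auto. Qed.

(* The partial sums never exceed the closed forms: induction on N, each step
   being convolution_bound_step with the fixed-point equations. *)
Lemma partial_sums_bnd z : 0 < z < / 4 -> forall N x, 0 <= x <= 1 ->
  sQ z N x <= g_closed z x /\ sP z N x <= f_closed z x.
Proof.
  intros Hz. induction N; intros x Hx.
  - unfold sQ, sP, Qterm, Pterm; simpl. rewrite Q_0, P_0.
    pose proof (g_closed_bnd z Hz x Hx). pose proof (f_closed_bnd z Hz x Hx). lra.
  - assert (HQ : RInt (sQ z N) x 1 <= g_int z x).
    { rewrite <- RInt_g_closed by auto.
      apply RInt_le; [lra | apply Cont_ex_RInt, sQ_cont | |].
      - apply closed_ex_RInt; auto; [apply g_closed_cont, Hz | lra].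
      - intros t Ht. apply IHN; lra. }
    assert (HP : RInt (sP z N) 0 x <= f_int z x).
    { rewrite <- RInt_f_closed by auto.
      apply RInt_le; [lra | apply Cont_ex_RInt, sP_cont | |].
      - apply closed_ex_RInt; auto; [apply f_closed_cont, Hz | lra].
      - intros t Ht. apply IHN; lra. }
    destruct (IHN x Hx) as [IQ IP]. split.
    + apply (convolution_bound_step (aQ z x) (Qterm z x) z) with (g_int z x);
        [lra | intros; apply aQ_nonneg; lra | intros; apply Qterm_nonneg; lra
        | unfold Qterm; rewrite Q_0; simpl; ring | intros; apply Qterm_succ
        | apply g_closed_fixed; auto | rewrite sum_aQ; auto | auto].
    + apply (convolution_bound_step (aP z x) (Pterm z x) z) with (f_int z x + g_int z x);
        [lra | intros; apply aP_nonneg; lra | intros; apply Pterm_nonneg; lra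
        | unfold Pterm; rewrite P_0; simpl; ring | intros; apply Pterm_succ
        | apply f_closed_fixed; auto | rewrite sum_aP; lra | auto].
Qed.

Section Limits.
Variable z : R.
Hypothesis Hz : 0 < z < / 4.

(* Comparison with z_up in (z, 1/4): the terms decay like rho^n, uniformly
   on [0,1]. *)
Definition z_up := (z + / 4) / 2.
Definition rho := z / z_up.

Lemma z_up_range : 0 < z_up < / 4.
Proof. unfold z_up; lra. Qed.

Lemma rho_range : 0 < rho < 1.
Proof.
  unfold rho, z_up. split; [apply Rdiv_lt_0_compat; lra|].
  apply (Rmult_lt_reg_r ((z + / 4) / 2)); [lra|].
  unfold Rdiv. rewrite Rmult_assoc, Rinv_l; lra.
Qed.

Lemma pow_z_up n : z ^ n = z_up ^ n * rho ^ n.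
Proof. rewrite <- Rpow_mult_distr. f_equal. unfold rho, z_up. field. lra. Qed.

Lemma Qterm_geom x n : 0 <= x <= 1 -> 0 <= Qterm z x n <= g_max z_up * rho ^ n.
Proof.
  intros Hx. pose proof z_up_range. pose proof rho_range.
  split; [apply Qterm_nonneg; lra|].
  unfold Qterm. rewrite pow_z_up, <- Rmult_assoc.
  apply Rmult_le_compat_r; [apply pow_le; lra|].
  apply Rle_trans with (sQ z_up n x);
    [apply (term_le_partial_sum (Qterm z_up x)); intros; apply Qterm_nonneg; lra|].
  apply Rle_trans with (g_closed z_up x); [apply partial_sums_bnd | apply g_closed_bnd]; auto.
Qed.

Lemma Pterm_geom x n : 0 <= x <= 1 -> 0 <= Pterm z x n <= f_max z_up * rho ^ n.
Proof.
  intros Hx. pose proof z_up_range. pose proof rho_range.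
  split; [apply Pterm_nonneg; lra|].
  unfold Pterm. rewrite pow_z_up, <- Rmult_assoc.
  apply Rmult_le_compat_r; [apply pow_le; lra|].
  apply Rle_trans with (sP z_up n x);
    [apply (term_le_partial_sum (Pterm z_up x)); intros; apply Pterm_nonneg; lra|].
  apply Rle_trans with (f_closed z_up x); [apply partial_sums_bnd | apply f_closed_bnd]; auto.
Qed.

Definition etaQ N := g_max z_up * rho ^ S N / (1 - rho).
Definition etaP N := f_max z_up * rho ^ S N / (1 - rho).

Definition LQ x := seq_lim (fun N => sQ z N x).
Definition BQ x := seq_lim (fun N => RInt (sQ z N) x 1).
Definition JQ x := g_int z x - BQ x.
Definition LP x := seq_lim (fun N => sP z N x).
Definition AP x := seq_lim (fun N => RInt (sP z N) 0 x).
Definition JP x := f_int z x - AP x.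

Lemma LQ_lim x : 0 <= x <= 1 -> is_lim_seq (fun N => sQ z N x) (LQ x).
Proof.
  intros Hx. apply (seq_lim_incr _ (g_closed z x)).
  - intros. apply partial_sum_mono; [intros; apply Qterm_nonneg; lra | lia].
  - intros. apply partial_sums_bnd; auto.
Qed.

Lemma LP_lim x : 0 <= x <= 1 -> is_lim_seq (fun N => sP z N x) (LP x).
Proof.
  intros Hx. apply (seq_lim_incr _ (f_closed z x)).
  - intros. apply partial_sum_mono; [intros; apply Pterm_nonneg; lra | lia].
  - intros. apply partial_sums_bnd; auto.
Qed.

Lemma LQ_bnd x : 0 <= x <= 1 -> 0 <= LQ x <= g_closed z x.
Proof.
  intros Hx. split.
  - apply (lim_ge_const _ _ _ (LQ_lim x Hx)). intros; apply sQ_nonneg; lra.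
  - apply (lim_le_const _ _ _ (LQ_lim x Hx)). intros; apply partial_sums_bnd; auto.
Qed.

Lemma LP_bnd x : 0 <= x <= 1 -> 0 <= LP x <= f_closed z x.
Proof.
  intros Hx. split.
  - apply (lim_ge_const _ _ _ (LP_lim x Hx)). intros; apply sP_nonneg; lra.
  - apply (lim_le_const _ _ _ (LP_lim x Hx)). intros; apply partial_sums_bnd; auto.
Qed.

Lemma RInt_sQ_bnd N x : 0 <= x <= 1 -> RInt (sQ z N) x 1 <= g_int z x.
Proof.
  intros Hx. rewrite <- RInt_g_closed by auto.
  apply RInt_le; [lra | apply Cont_ex_RInt, sQ_cont | |].
  - apply closed_ex_RInt; [apply g_closed_cont, Hz | auto | lra].
  - intros t Ht. apply partial_sums_bnd; auto; lra.
Qed.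

Lemma RInt_sP_bnd N x : 0 <= x <= 1 -> RInt (sP z N) 0 x <= f_int z x.
Proof.
  intros Hx. rewrite <- RInt_f_closed by auto.
  apply RInt_le; [lra | apply Cont_ex_RInt, sP_cont | |].
  - apply closed_ex_RInt; [apply f_closed_cont, Hz | lra | auto].
  - intros t Ht. apply partial_sums_bnd; auto; lra.
Qed.

Lemma BQ_lim x : 0 <= x <= 1 -> is_lim_seq (fun N => RInt (sQ z N) x 1) (BQ x).
Proof.
  intros Hx. apply (seq_lim_incr _ (g_int z x)).
  - intros. rewrite <- !sum_aQ. apply partial_sum_mono; [intros; apply aQ_nonneg; lra | lia].
  - intros. apply RInt_sQ_bnd; auto.
Qed.

Lemma AP_lim x : 0 <= x <= 1 -> is_lim_seq (fun N => RInt (sP z N) 0 x) (AP x).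
Proof.
  intros Hx. apply (seq_lim_incr _ (f_int z x)).
  - intros N. unfold sP, Pterm. rewrite !(RInt_sum P (fun n => z ^ n)) by apply P_cont.
    apply partial_sum_mono; [|lia]. intros n. apply Rmult_le_pos; [|apply pow_le; lra].
    apply RInt_nonneg; [apply P_cont | lra | intros; apply P_nonneg; lra].
  - intros. apply RInt_sP_bnd; auto.
Qed.

Lemma LQ_fixed x : 0 <= x <= 1 -> LQ x = 1 + z * BQ x * LQ x.
Proof.
  intros Hx. apply (convolution_fixed_point (aQ z x) (Qterm z x) z);
    [intros; apply aQ_nonneg; lra | intros; apply Qterm_nonneg; lra
    | unfold Qterm; rewrite Q_0; simpl; ring | intros; apply Qterm_succ | | apply LQ_lim; auto].
  apply (is_lim_seq_ext (fun N => RInt (sQ z N) x 1)); [intros; symmetry; apply sum_aQ|].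
  apply BQ_lim; auto.
Qed.

Lemma LP_fixed x : 0 <= x <= 1 -> LP x = 1 + z * (AP x + BQ x) * LP x.
Proof.
  intros Hx. apply (convolution_fixed_point (aP z x) (Pterm z x) z);
    [intros; apply aP_nonneg; lra | intros; apply Pterm_nonneg; lra
    | unfold Pterm; rewrite P_0; simpl; ring | intros; apply Pterm_succ | | apply LP_lim; auto].
  apply (is_lim_seq_ext (fun N => RInt (sP z N) 0 x + RInt (sQ z N) x 1));
    [intros; symmetry; apply sum_aP|].
  apply is_lim_seq_plus'; [apply AP_lim | apply BQ_lim]; auto.
Qed.

Definition CQ := z * g_max z * g_max z.
Definition CP := z * f_max z * f_max z.

Lemma CQ_nonneg : 0 <= CQ.
Proof. pose proof (g_closed_bnd z Hz 0 ltac:(lra)). unfold CQ. apply Rmult_le_pos; nra. Qed.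

Lemma CP_nonneg : 0 <= CP.
Proof. pose proof (f_closed_bnd z Hz 0 ltac:(lra)). unfold CP. apply Rmult_le_pos; nra. Qed.

Lemma JQ_nonneg x : 0 <= x <= 1 -> 0 <= JQ x.
Proof.
  intros Hx. unfold JQ. cut (BQ x <= g_int z x); [lra|].
  apply (lim_le_const _ _ _ (BQ_lim x Hx)). intros; apply RInt_sQ_bnd; auto.
Qed.

Lemma JP_nonneg x : 0 <= x <= 1 -> 0 <= JP x.
Proof.
  intros Hx. unfold JP. cut (AP x <= f_int z x); [lra|].
  apply (lim_le_const _ _ _ (AP_lim x Hx)). intros; apply RInt_sP_bnd; auto.
Qed.

Lemma Q_gap x : 0 <= x <= 1 -> g_closed z x - LQ x <= CQ * JQ x.
Proof.
  intros Hx.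
  rewrite (fixed_point_diff _ _ _ _ z (g_closed_fixed z Hz x Hx) (LQ_fixed x Hx)).
  fold (JQ x). pose proof (g_closed_bnd z Hz x Hx). pose proof (LQ_bnd x Hx).
  pose proof (JQ_nonneg x Hx). unfold CQ.
  assert (g_closed z x * LQ x <= g_max z * g_max z) by (apply Rmult_le_compat; lra).
  assert (0 <= z * JQ x) by (apply Rmult_le_pos; lra). nra.
Qed.

Lemma P_gap x : 0 <= x <= 1 -> BQ x = g_int z x -> f_closed z x - LP x <= CP * JP x.
Proof.
  intros Hx HB. pose proof (LP_fixed x Hx) as HL. rewrite HB in HL.
  rewrite (fixed_point_diff _ _ _ _ z (f_closed_fixed z Hz x Hx) HL).
  replace (f_int z x + g_int z x - (AP x + g_int z x)) with (JP x) by (unfold JP; ring).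
  pose proof (f_closed_bnd z Hz x Hx). pose proof (LP_bnd x Hx).
  pose proof (JP_nonneg x Hx). unfold CP.
  assert (f_closed z x * LP x <= f_max z * f_max z) by (apply Rmult_le_compat; lra).
  assert (0 <= z * JP x) by (apply Rmult_le_pos; lra). nra.
Qed.

Lemma Q_tail N x : 0 <= x <= 1 -> LQ x - sQ z N x <= etaQ N.
Proof.
  intros Hx. apply (geometric_tail (Qterm z x)); [apply rho_range | |].
  - intros; apply Qterm_geom; auto.
  - apply LQ_lim; auto.
Qed.

Lemma P_tail N x : 0 <= x <= 1 -> LP x - sP z N x <= etaP N.
Proof.
  intros Hx. apply (geometric_tail (Pterm z x)); [apply rho_range | |].
  - intros; apply Pterm_geom; auto.
  - apply LP_lim; auto.
Qed.

Lemma JQ_increment x y : 0 <= x -> x <= y -> y <= 1 ->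
  is_lim_seq (fun N => RInt (g_closed z) x y - RInt (sQ z N) x y) (JQ x - JQ y).
Proof.
  intros Hx Hxy Hy.
  apply (is_lim_seq_ext (fun N => (g_int z x - RInt (sQ z N) x 1) - (g_int z y - RInt (sQ z N) y 1))).
  - intros N. rewrite <- !RInt_g_closed by lra.
    rewrite <- (RInt_Chasles (g_closed z) x y 1), <- (RInt_Chasles (sQ z N) x y 1);
      try (apply Cont_ex_RInt, sQ_cont);
      try (apply closed_ex_RInt; [apply g_closed_cont, Hz | lra | lra]).
    unfold plus; simpl. ring.
  - unfold JQ. apply is_lim_seq_minus'; apply is_lim_seq_minus';
      try apply is_lim_seq_const; apply BQ_lim; lra.
Qed.

Lemma JP_increment x y : 0 <= x -> x <= y -> y <= 1 ->
  is_lim_seq (fun N => RInt (f_closed z) x y - RInt (sP z N) x y) (JP y - JP x).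
Proof.
  intros Hx Hxy Hy.
  apply (is_lim_seq_ext (fun N => (f_int z y - RInt (sP z N) 0 y) - (f_int z x - RInt (sP z N) 0 x))).
  - intros N. rewrite <- !RInt_f_closed by lra.
    rewrite <- (RInt_Chasles (f_closed z) 0 x y), <- (RInt_Chasles (sP z N) 0 x y);
      try (apply Cont_ex_RInt, sP_cont);
      try (apply closed_ex_RInt; [apply f_closed_cont, Hz | lra | lra]).
    unfold plus; simpl. ring.
  - unfold JP. apply is_lim_seq_minus'; apply is_lim_seq_minus';
      try apply is_lim_seq_const; apply AP_lim; lra.
Qed.

(* int_x^1 Q-series = int_x^1 g: Gronwall, in the variable 1 - x. *)
Lemma BQ_eq x : 0 <= x <= 1 -> BQ x = g_int z x.
Proof.
  intros Hx.
  assert (Hg : forall a b, 0 <= a <= 1 -> 0 <= b <= 1 -> ex_RInt (g_closed z) a b).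
  { intros; apply closed_ex_RInt; auto; apply g_closed_cont, Hz. }
  cut (JQ (1 - (1 - x)) = 0); [replace (1 - (1 - x)) with x by ring; unfold JQ; lra|].
  apply (integral_gap_vanish (fun t => g_closed z (1 - t)) (fun t => LQ (1 - t))
           (fun t => JQ (1 - t)) (fun N t => sQ z N (1 - t)) etaQ CQ);
    [apply CQ_nonneg | apply geometric_tail_lim, rho_range
    | intros; apply Cont_reflect, sQ_cont | | | | | | | lra].
  - intros a b Ha Hab Hb. apply ex_RInt_reflect, Hg; lra.
  - intros N t Ht. apply partial_sums_bnd; auto; lra.
  - intros N t Ht. apply Q_tail; lra.
  - intros t Ht. apply Q_gap; lra.
  - intros a b Ha Hab Hb.
    apply (is_lim_seq_ext (fun N => RInt (g_closed z) (1 - b) (1 - a) - RInt (sQ z N) (1 - b) (1 - a)));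
      [|apply JQ_increment; lra].
    intros N. rewrite !RInt_reflect; [reflexivity | apply Cont_ex_RInt, sQ_cont | apply Hg; lra].
  - replace (1 - 0) with 1 by ring. unfold JQ. rewrite g_int_1.
    cut (BQ 1 = 0); [lra|].
    unfold BQ, seq_lim.
    rewrite (Lim_seq_ext _ (fun _ => 0)), Lim_seq_const; [reflexivity|].
    intros; apply (@RInt_point R_CompleteNormedModule).
Qed.

Lemma P_series x : 0 <= x <= 1 -> is_lim_seq (sum_f_R0 (Pterm z x)) (f_closed z x).
Proof.
  intros Hx.
  assert (HJ : JP x = 0).
  { apply (integral_gap_vanish (f_closed z) LP JP (sP z) etaP CP);
      [apply CP_nonneg | apply geometric_tail_lim, rho_range | apply sP_cont | | | | | | | auto].
    - intros; apply closed_ex_RInt; [apply f_closed_cont, Hz | lra | lra].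
    - intros N t Ht. apply partial_sums_bnd; auto.
    - intros N t Ht. apply P_tail; auto.
    - intros t Ht. apply P_gap, BQ_eq; auto.
    - apply JP_increment.
    - unfold JP. rewrite f_int_0 by auto.
      unfold AP, seq_lim. rewrite (Lim_seq_ext _ (fun _ => 0)), Lim_seq_const; [simpl; ring|].
      intros; apply (@RInt_point R_CompleteNormedModule). }
  replace (f_closed z x) with (LP x); [apply LP_lim; auto|].
  pose proof (P_gap x Hx (BQ_eq x Hx)). pose proof (LP_bnd x Hx). rewrite HJ in H. lra.
Qed.

End Limits.

Theorem mainTheorem5 (z x : R) (hz : 0 < z < / 4) (hx : 0 <= x <= 1) :
  infinite_sum (fun n => P n x * z ^ n)
    (/ (sqrt (2 * z * x + 1 - 2 * z)
        * Sinv (sqrt ((2 * z * x + 1 - 2 * z) / (1 - 2 * z))))).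
Proof. apply is_lim_seq_Reals, (P_series z hz x hx). Qed.
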